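(* Let $X$ be a real Banach space with dual $X^*$ and let $T:X\rightrightarrows X^*$ be a set-valued map. If $-T$ is pseudo-monotone, then $T$ is lower sign-continuous at every point of $\operatorname{int}(\operatorname{dom}(T))$.
   Context: $\operatorname{dom}(T)=\{x\in X: T(x)\neq\emptyset\}$ and $\langle\cdot,\cdot\rangle$ is the duality pairing. A set-valued map $S:X\rightrightarrows X^*$ is pseudo-monotone if for all $x,y\in X$: whenever there exists $x^*\in S(x)$ with $\langle x^*,y-x\rangle\geq 0$, then $\langle y^*,x-y\rangle\leq 0$ for all $y^*\in S(y)$ (here $-T$ is the map $x\mapsto\{-x^*: x^*\in T(x)\}$). $T$ is lower sign-continuous at $x\in\operatorname{dom}(T)$ if for every $v\in X$: if $\inf_{x_t^*\in T(x_t)}\langle x_t^*,v\rangle\geq 0$ for all $t\in\,]0,1[$, where $x_t=x+tv$, then $\inf_{x^*\in T(x)}\langle x^*,v\rangle\geq 0$. *)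

From HB Require Import structures.
From mathcomp Require Import all_boot all_order all_algebra.
From mathcomp Require Import all_classical all_reals all_analysis.
Set Implicit Arguments. Unset Strict Implicit. Unset Printing Implicit Defensive.
Import Order.TTheory GRing.Theory Num.Theory.
Import numFieldNormedType.Exports.
Local Open Scope classical_set_scope.
Local Open Scope ring_scope.

Record dual (R : realType) (X : normedModType R) := Dual {
  dual_fun :> X -> R;
  dual_linear : forall (a : R) (u v : X), dual_fun (a *: u + v) = a * dual_fun u + dual_fun v;
  dual_cont : continuous dual_fun }.
Arguments dual_cont {R X} d x : rename.

Definition pairing (R : realType) (X : normedModType R) (xs : dual X) (x : X) : R :=
  dual_fun xs x.

Section Opp.
Variables (R : realType) (X : normedModType R).
Lemma dual_opp_linear (f : dual X) (a : R) (u v : X) :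
  - f (a *: u + v) = a * - f u + - f v.
Proof. by rewrite dual_linear opprD mulrN. Qed.
Lemma dual_opp_cont (f : dual X) : continuous (fun x : X => - dual_fun f x).
Proof. move=> x; exact: (continuousN (dual_cont f x)). Qed.
Definition dual_opp (f : dual X) : dual X :=
  @Dual R X (fun x : X => - dual_fun f x) (dual_opp_linear f) (@dual_opp_cont f).
End Opp.

Definition setmap (R : realType) (X : normedModType R) := X -> set (dual X).

Definition dom (R : realType) (X : normedModType R) (T : setmap X) : set X :=
  [set x | T x != set0].

Definition negmap (R : realType) (X : normedModType R) (T : setmap X) : setmap X :=
  fun x => (@dual_opp R X) @` T x.

Definition pseudo_monotone (R : realType) (X : normedModType R) (S : setmap X) : Prop :=
  forall x y : X,
    (exists2 xs, S x xs & 0 <= pairing xs (y - x)) ->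
    forall ys, S y ys -> pairing ys (x - y) <= 0.

(* inf_{x* in T z} <x*, v>, as an extended real (inf of the empty set is +oo) *)
Definition inf_pair (R : realType) (X : normedModType R) (T : setmap X) (z v : X) : \bar R :=
  ereal_inf [set (pairing xs v)%:E | xs in T z].

Definition lower_sign_continuous_at (R : realType) (X : normedModType R)
    (T : setmap X) (x : X) : Prop :=
  forall v : X,
    (forall t : R, 0 < t < 1 -> (0 <= inf_pair T (x + t *: v)%R v)%E) ->
    (0 <= inf_pair T x v)%E.

(** If every [x*] in [T x] had [<x*, v> < 0] while some [y*] in [T (x + t v)]
    had [<y*, v> >= 0], pseudo-monotonicity of [-T] applied to the pair
    [(x + t v, x)] would be violated.  Since [x] is interior to [dom T], such
    a point [x + t v] with [T (x + t v)] nonempty exists for small [t > 0], and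
    the hypothesis of lower sign-continuity provides the sign of [<y*, v>]. *)
From HB Require Import structures.
From mathcomp Require Import all_boot all_order all_algebra.
From mathcomp Require Import all_classical all_reals all_analysis.
Set Implicit Arguments. Unset Strict Implicit. Unset Printing Implicit Defensive.
Import numFieldNormedType.Exports.
Import Order.TTheory GRing.Theory Num.Theory.
Local Open Scope classical_set_scope.
Local Open Scope ring_scope.

Section DualLinear.
Variables (R : realType) (X : normedModType R) (f : dual X).

Lemma dual0 : f 0 = 0.
Proof.
have := dual_linear f 1 0 0; rewrite scaler0 addr0 mul1r.
by rewrite -[LHS]addr0 => /addrI.
Qed.

Lemma dualZ (a : R) (u : X) : f (a *: u) = a * f u.
Proof. by have := dual_linear f a u 0; rewrite !addr0 dual0 addr0. Qed.

Lemma dualN (u : X) : f (- u) = - f u.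
Proof. by rewrite -scaleN1r dualZ mulN1r. Qed.

End DualLinear.

Section SetMaps.
Variables (R : realType) (X : normedModType R) (T : setmap X).

Lemma inf_pair_ge0 (z v : X) :
  (0 <= inf_pair T z v)%E <-> forall zs, T z zs -> 0 <= pairing zs v.
Proof.
split=> [inf_ge0 zs Tzs | pair_ge0].
  rewrite -lee_fin; apply: le_trans inf_ge0 _.
  by apply: ereal_inf_lbound; exists zs.
by apply: le_ereal_inf_tmp => _ [zs Tzs <-]; rewrite lee_fin pair_ge0.
Qed.

Lemma pseudo_monotone_negmap_sign (x y : X) (ys xs : dual X) :
  pseudo_monotone (negmap T) -> T y ys -> 0 <= pairing ys (y - x) ->
  T x xs -> 0 <= pairing xs (y - x).
Proof.
move=> pm Tys ys_ge0 Txs.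
rewrite -oppr_le0; apply: (pm y x _ (dual_opp xs)); last by exists xs.
exists (dual_opp ys); first by exists ys.
by rewrite /pairing /= -opprB dualN opprK.
Qed.

End SetMaps.

Lemma nbhs_open_segment {R : realType} {X : normedModType R} {A : set X} {x : X} (v : X) :
  nbhs x A -> exists2 t : R, 0 < t < 1 & A (x + t *: v).
Proof.
move=> xA.
have segment_cvg : x + t *: v @[t --> 0^'+] --> x.
  apply: cvg_within_filter.
  have : x + t *: v @[t --> (0 : R)] --> x + 0 *: v.
    exact: cvgD (cvg_cst x) (cvgZ cvg_id (cvg_cst v)).
  by rewrite scale0r addr0.
near (0 : R)^'+ => t.
exists t; last by near: t; exact: segment_cvg.
apply/andP; split; near: t; [exact: nbhs_right_gt | exact: nbhs_right_lt].
Unshelve. all: by end_near.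
Qed.

Theorem proposition6p1 (R : realType) (X : completeNormedModType R) (T : setmap X) :
  pseudo_monotone (negmap T) ->
  forall x : X, interior (dom T) x -> lower_sign_continuous_at T x.
Proof.
move=> pm x x_int v sign_near.
have [t /andP[t_gt0 t_lt1] /set0P[ys Tys]] := nbhs_open_segment v x_int.
have segment_sub : x + t *: v - x = t *: v by rewrite addrC addKr.
have ys_v_ge0 : 0 <= pairing ys v.
  by apply: (inf_pair_ge0 T _ _).1 Tys; apply: sign_near; rewrite t_gt0.
have ys_ge0 : 0 <= pairing ys (x + t *: v - x).
  by rewrite segment_sub /pairing dualZ; apply: mulr_ge0 (ltW t_gt0) ys_v_ge0.
apply/inf_pair_ge0 => xs Txs.
have := pseudo_monotone_negmap_sign pm Tys ys_ge0 Txs.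
by rewrite segment_sub /pairing dualZ pmulr_rge0.
Qed.
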